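(* For every $n\ge 5$, the sensitivity to synchronism of elementary cellular automaton rule $8$ satisfies $\mu(f_{8,n})=\dfrac{\phi^{2n}+\phi^{-2n}-2^n}{3^n-2^{n+1}+2}$, where $\phi=\frac{1+\sqrt5}{2}$ is the golden ratio.
   Context: Cells are indexed by $\mathbb{Z}_n=\{0,\dots,n-1\}$, indices modulo $n$. Rule $8$ has local rule $r_8(x_1,x_2,x_3)=\neg x_1\wedge x_2\wedge x_3$ and global function $f_{8,n}(x)_i=r_8(x_{i-1},x_i,x_{i+1})$. An update schedule is an ordered partition $\Delta=(\Delta_1,\dots,\Delta_k)$ of $\mathbb{Z}_n$ into nonempty blocks; $\mathcal{P}_n$ is the set of them. For a block $B$ let $f^{(B)}(x)_i=f_{8,n}(x)_i$ if $i\in B$ and $x_i$ otherwise; $f^{(\Delta)}_{8,n}=f^{(\Delta_k)}\circ\cdots\circ f^{(\Delta_1)}$. The dynamics of $\Delta$ is the transition digraph with arcs $(x,f^{(\Delta)}_{8,n}(x))$; $\mathcal{D}(f_{8,n})$ is the set of distinct dynamics over $\Delta\in\mathcal{P}_n$. The sensitivity to synchronism is $\mu(f_{8,n})=|\mathcal{D}(f_{8,n})|/(3^n-2^{n+1}+2)$. *)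

From HB Require Import structures.
From mathcomp Require Import all_boot all_order all_algebra.
From mathcomp Require Import boolp reals.
Set Implicit Arguments. Unset Strict Implicit. Unset Printing Implicit Defensive.
Import Order.TTheory GRing.Theory Num.Theory.

Definition config (n : nat) := {ffun 'I_n -> bool}.

Definition r8 (x1 x2 x3 : bool) : bool := ~~ x1 && x2 && x3.

Definition f8 (n : nat) (x : config n) : config n :=
  [ffun i => r8 (x (ord_pred i)) (x i) (x (ordS i))].

Definition fblock (n : nat) (B : {set 'I_n}) (x : config n) : config n :=
  [ffun i => if i \in B then f8 x i else x i].

Definition fsched (n : nat) (D : seq {set 'I_n}) (x : config n) : config n :=
  foldl (fun y B => fblock B y) x D.

Definition is_update_schedule (n : nat) (D : seq {set 'I_n}) : Prop :=
  all (fun B => B != set0) D /\ forall i : 'I_n, count (fun B : {set 'I_n} => i \in B) D = 1%N.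

(* the dynamics (transition digraph x -> f^{(Delta)}(x)), represented by its
   (functional) arc map *)
Definition dynamics (n : nat) (D : seq {set 'I_n}) :
  {ffun config n -> config n} := [ffun x => fsched D x].

Definition dyn_set (n : nat) : {set {ffun config n -> config n}} :=
  [set F | `[< exists D : seq {set 'I_n}, is_update_schedule D /\ F = dynamics D >]].

Definition mu8 (R : realType) (n : nat) : R :=
  (#|dyn_set n|%:R / ((3%:R : R) ^+ n - (2%:R : R) ^+ n.+1 + 2%:R))%R.

Definition golden (R : realType) : R := ((1 + Num.sqrt (5%:R : R)) / 2%:R)%R.

From HB Require Import structures.
From mathcomp Require Import all_boot all_order all_algebra.
From mathcomp Require Import boolp reals.
From mathcomp Require Import zify ring.
Import Order.TTheory GRing.Theory Num.Theory.
Set Implicit Arguments. Unset Strict Implicit. Unset Printing Implicit Defensive.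

(* A schedule acts through the ranks r of its blocks only: the image y of x is
   the unique solution of y_i = r8 (y'_(i-1), x_i, y'_(i+1)), where a neighbour
   contributes its new value iff its rank is smaller than r_i.  So the dynamics
   depends only on the cyclic word comparing r_i with r_(i+1), and for rule 8 on
   even less: a peak (a cell ranked above both neighbours) always becomes 0,
   because it needs x_i = 1 while its right neighbour, updated earlier, can only
   become 1 if x_i = 0.  Flattening the [Lt] just below each peak to [Eq] gives
   the peakless cyclic words; all of them except 2^n degenerate ones come from
   schedules, and for n >= 5 distinct words give distinct dynamics, as seen on
   configurations with a single 0.  Finally the peakless cyclic words of length
   n are counted by the trace of the n-th power of a 3x3 transfer matrix with
   characteristic polynomial t (t^2 - 3t + 1), i.e. phi^(2n) + phi^(-2n). *)

Definition comparison_code (c : comparison) : option bool :=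
  match c with Lt => Some true | Gt => Some false | Eq => None end.

Definition comparison_decode (o : option bool) : comparison :=
  match o with Some true => Lt | Some false => Gt | None => Eq end.

Lemma comparison_codeK : cancel comparison_code comparison_decode.
Proof. by case. Qed.

HB.instance Definition _ := Finite.copy comparison (can_type comparison_codeK).

Lemma comparison_eq (a b : comparison) :
  (a == Lt) = (b == Lt) -> (a == Gt) = (b == Gt) -> a = b.
Proof. by case: a; case: b. Qed.

Definition cmpn (m k : nat) : comparison :=
  if m < k then Lt else if k < m then Gt else Eq.

Lemma cmpn_Lt m k : (cmpn m k == Lt) = (m < k).
Proof. by rewrite /cmpn; case: ltngtP. Qed.

Lemma cmpn_Gt m k : (cmpn m k == Gt) = (k < m).
Proof. by rewrite /cmpn; case: ltngtP. Qed.

Lemma cmpn_Eq m k : (cmpn m k == Eq) = (m == k).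
Proof. by rewrite /cmpn; case: ltngtP. Qed.

Local Notation cword n := {ffun 'I_n -> comparison}.

Definition nopeak (a b : comparison) : bool := ~~ ((a == Lt) && (b == Gt)).

Lemma injective_leq_eq (T : finType) (h : T -> T) (f : T -> nat) :
  injective h -> (forall i, f i <= f (h i)) -> forall i, f i = f (h i).
Proof.
move=> h_inj f_le.
have sum_diff : \sum_i (f (h i) - f i) + \sum_i f i = \sum_i f i.
  rewrite -big_split /= [RHS](reindex_inj h_inj).
  by apply: eq_bigr => i _; rewrite subnK.
move/eqP: sum_diff; rewrite -{2}[\sum_i f i]add0n eqn_add2r sum_nat_eq0.
move=> /forallP diff0 i; apply/eqP; rewrite eqn_leq f_le /= -subn_eq0.
exact: diff0.
Qed.

Section Dynamics.
Variable n : nat.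
Implicit Types (D : seq {set 'I_n}) (x y : config n) (r : 'I_n -> nat)
  (w : cword n).

Local Notation in_block i := (fun B : {set 'I_n} => i \in B).

(** * Schedules as rankings *)

Definition rank D (i : 'I_n) : nat := find (in_block i) D.

Definition seen r x y (i j : 'I_n) : bool := if r j < r i then y j else x j.

Definition rank_solution r x y : Prop :=
  forall i, y i = r8 (seen r x y i (ord_pred i)) (x i) (seen r x y i (ordS i)).

Lemma fsched_cons B D x : fsched (B :: D) x = fsched D (fblock B x).
Proof. by []. Qed.

Lemma fsched_out D x i : ~~ has (in_block i) D -> fsched D x i = x i.
Proof.
elim: D x => [|B D IH] x //= /norP[iB iD].
by rewrite IH // ffunE (negbTE iB).
Qed.

Lemma fsched_seen D x i :
  (forall j, count (in_block j) D <= 1) -> has (in_block i) D ->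
  fsched D x i =
    r8 (seen (rank D) x (fsched D x) i (ord_pred i)) (x i)
       (seen (rank D) x (fsched D x) i (ordS i)).
Proof.
elim: D x => [|B D IH] x // count_le1.
have count_le1' j : count (in_block j) D <= 1.
  by have := count_le1 j; rewrite /=; case: (j \in B) => /=; lia.
have out_B j : j \in B -> ~~ has (in_block j) D.
  by move=> jB; have := count_le1 j; rewrite /= jB has_count; lia.
rewrite fsched_cons => /= iD; case iB: (i \in B) in iD *.
  by rewrite fsched_out ?out_B // !ffunE iB /seen /rank /= iB !ltn0.
set y := fsched D (fblock B x).
have seenE j : seen (rank (B :: D)) x y i j = seen (rank D) (fblock B x) y i j.
  rewrite /seen /rank /= iB; case jB: (j \in B); last by rewrite ltnS ffunE jB.
  have := out_B j jB; rewrite has_find -leqNgt => jD.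
  move: iD; rewrite has_find => iD.
  by rewrite ltn0Sn ltnNge (leq_trans (ltnW iD) jD) /y fsched_out ?out_B.
have fx_i : fblock B x i = x i by rewrite ffunE iB.
by rewrite !seenE -fx_i; apply: IH.
Qed.

Lemma fsched_rank_solution D x :
  (forall i, count (in_block i) D = 1) -> rank_solution (rank D) x (fsched D x).
Proof.
move=> count1 i; apply: fsched_seen => [j|]; first by rewrite count1.
by rewrite has_count count1.
Qed.

Lemma rank_solution_uniq r x y y' :
  rank_solution r x y -> rank_solution r x y' -> y = y'.
Proof.
move=> hy hy'; suff eq_below k i : r i < k -> y i = y' i.
  by apply/ffunP => i; apply: (eq_below (r i).+1).
elim: k i => [|k IH] i //= ri_le.
rewrite hy hy' /seen; congr r8; case: ifP => // lt_ri;
  by apply: IH; apply: leq_trans lt_ri _.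
Qed.

Definition blocks r : seq {set 'I_n} :=
  [seq [set i | r i == k] | k <- iota 0 (\max_i r i).+1].

Lemma mem_iota_rank r i : r i \in iota 0 (\max_i r i).+1.
Proof. by rewrite mem_iota add0n ltnS leq_bigmax. Qed.

Lemma count_blocks r i : count (in_block i) (blocks r) = 1.
Proof.
rewrite count_map (eq_count (a2 := pred1 (r i))) => [|k]; last by rewrite /= inE eq_sym.
by rewrite count_uniq_mem ?iota_uniq // mem_iota_rank.
Qed.

Lemma rank_blocks r i : rank (blocks r) i = r i.
Proof.
rewrite /rank find_map (eq_find (a2 := pred1 (r i))) => [|k]; last by rewrite /= inE eq_sym.
have := mem_iota_rank r i; rewrite -index_mem size_iota => lt_idx.
by have := nth_index 0 (mem_iota_rank r i); rewrite nth_iota.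
Qed.

Lemma rank_solution_exists r x : exists y, rank_solution r x y.
Proof.
exists (fsched (blocks r) x) => i.
by have := fsched_rank_solution x (count_blocks r) i; rewrite /seen !rank_blocks.
Qed.

Lemma fsched_filter_nonempty D x : fsched [seq B <- D | B != set0] x = fsched D x.
Proof.
elim: D x => [|B D IH] x //; rewrite fsched_cons -IH /=.
case: eqP => [-> | _] //=; congr fsched.
by apply/ffunP => i; rewrite ffunE inE.
Qed.

(** * Comparison words *)

Definition labels r : cword n := [ffun i => cmpn (r i) (r (ordS i))].

Definition label_solution w x y : bool :=
  [forall i, y i == r8 (if w (ord_pred i) == Lt then y (ord_pred i) else x (ord_pred i))
                       (x i) (if w i == Gt then y (ordS i) else x (ordS i))].

Lemma label_solutionP w x y :
  reflect (forall i, y i = r8 (if w (ord_pred i) == Lt then y (ord_pred i) else x (ord_pred i))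
                              (x i) (if w i == Gt then y (ordS i) else x (ordS i)))
          (label_solution w x y).
Proof. by apply: (iffP forallP) => h i; apply/eqP. Qed.

Lemma rank_solutionE r x y : rank_solution r x y <-> label_solution (labels r) x y.
Proof.
have predLt i : (labels r (ord_pred i) == Lt) = (r (ord_pred i) < r i).
  by rewrite ffunE ord_predK cmpn_Lt.
have Gt_i i : (labels r i == Gt) = (r (ordS i) < r i) by rewrite ffunE cmpn_Gt.
split=> [hy|/label_solutionP hy i]; last by rewrite hy /seen predLt Gt_i.
by apply/label_solutionP => i; rewrite predLt Gt_i hy.
Qed.

Lemma label_solution_le w x y i : label_solution w x y -> y i -> x i.
Proof. by move=> /label_solutionP ->; rewrite /r8 => /andP[/andP[]]. Qed.

(* The cell [ordS i] is updated before [i], so it reads the old value [x i]. *)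
Lemma label_solution_Gt w x y i :
  label_solution w x y -> w i = Gt -> x i && y (ordS i) = false.
Proof. by move=> /label_solutionP ->; rewrite ordSK => ->; case: (x i). Qed.

Definition flatten_peaks w : cword n :=
  [ffun i => if (w i == Lt) && (w (ordS i) == Gt) then Eq else w i].

Lemma flatten_peaks_Gt w i : (flatten_peaks w i == Gt) = (w i == Gt).
Proof. by rewrite ffunE; case: ifP => // /andP[/eqP -> _]. Qed.

Lemma flatten_peaks_pred_Lt w i :
  (flatten_peaks w (ord_pred i) == Lt) = (w (ord_pred i) == Lt) && (w i != Gt).
Proof.
rewrite ffunE ord_predK.
by case: (w (ord_pred i) =P Lt) => [->|/eqP/negbTE ->]; case: (w i == Gt).
Qed.

Lemma label_solution_relabel w w' x y :
  (forall i, (w' i == Gt) = (w i == Gt)) ->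
  (forall i, w i != Gt -> (w' (ord_pred i) == Lt) = (w (ord_pred i) == Lt)) ->
  label_solution w x y -> label_solution w' x y.
Proof.
move=> sameGt sameLt sol; have /label_solutionP y_eq := sol.
apply/label_solutionP => i; case w_i: (w i == Gt).
  by rewrite y_eq sameGt w_i /r8 -!andbA (label_solution_Gt sol (eqP w_i)) !andbF.
by rewrite y_eq sameGt w_i sameLt ?w_i.
Qed.

(* A peak is 0 by [label_solution_Gt], whatever it reads from its left neighbour. *)
Lemma label_solution_flatten w x y :
  label_solution (flatten_peaks w) x y = label_solution w x y.
Proof.
apply/idP/idP; apply: label_solution_relabel => i;
  by rewrite ?flatten_peaks_Gt // flatten_peaks_pred_Lt => ->; rewrite andbT.
Qed.

(* The default [x] is never used: admissible words always have solutions. *)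
Definition ldyn w : {ffun config n -> config n} :=
  [ffun x => odflt x [pick y | label_solution w x y]].

Lemma ldyn_solution w x y : label_solution w x y -> label_solution w x (ldyn w x).
Proof. by move=> sol; rewrite ffunE; case: pickP => [//|/(_ y)]; rewrite sol. Qed.

Lemma dynamics_labels D :
  (forall i, count (in_block i) D = 1) ->
  dynamics D = ldyn (flatten_peaks (labels (rank D))).
Proof.
move=> count1; apply/ffunP => x; rewrite ffunE.
apply: (rank_solution_uniq (fsched_rank_solution x count1)).
apply/rank_solutionE; rewrite -label_solution_flatten; apply: ldyn_solution.
by rewrite label_solution_flatten; apply/rank_solutionE/fsched_rank_solution.
Qed.

Lemma schedule_of_ranks r :
  exists2 D, is_update_schedule D & dynamics D = ldyn (flatten_peaks (labels r)).
Proof.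
exists [seq B <- blocks r | B != set0].
  split=> [|i]; first exact: filter_all.
  rewrite count_filter -(count_blocks r i); apply: eq_count => B /=.
  by case: (boolP (i \in B)) => //= iB; apply/set0Pn; exists i.
have -> : dynamics [seq B <- blocks r | B != set0] = dynamics (blocks r).
  by apply/ffunP => x; rewrite !ffunE fsched_filter_nonempty.
rewrite dynamics_labels; last exact: count_blocks.
by congr (ldyn (flatten_peaks _)); apply/ffunP => i; rewrite !ffunE !rank_blocks.
Qed.

Definition peakless :=
  [set w : cword n | [forall i, nopeak (w i) (w (ordS i))]].

(* Words asking for ranks that are non-decreasing but not constant, or strictly
   decreasing, all around the cycle. *)
Definition degenerate := [set w : cword n |
  [forall i, w i != Gt] && [exists i, w i != Eq] || [forall i, w i == Gt]].

Definition admissible := peakless :\: degenerate.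

Lemma flatten_peaks_peakless w : flatten_peaks w \in peakless.
Proof.
rewrite inE; apply/forallP => i; rewrite /nopeak flatten_peaks_Gt ffunE.
by case: (w i); case: (w (ordS i)).
Qed.

Lemma labels_nondegenerate r (i0 : 'I_n) : flatten_peaks (labels r) \notin degenerate.
Proof.
have labels_Gt i : (flatten_peaks (labels r) i == Gt) = (r (ordS i) < r i).
  by rewrite flatten_peaks_Gt ffunE cmpn_Gt.
rewrite inE negb_or; apply/andP; split.
  apply/negP => /andP[/forallP noGt /existsP[j]]; apply/negP; rewrite negbK.
  have r_le i : r i <= r (ordS i) by rewrite leqNgt -labels_Gt noGt.
  have r_eq := injective_leq_eq (@ordS_inj n) r_le.
  rewrite ffunE -(flatten_peaks_Gt (labels r) (ordS j)) (negbTE (noGt _)) andbF.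
  by rewrite ffunE cmpn_Eq r_eq.
apply/negP => /forallP allGt.
have r_le i : r i <= r (ord_pred i).
  by apply: ltnW; rewrite -{1}(ord_predK i) -labels_Gt.
have := allGt i0; rewrite labels_Gt (injective_leq_eq (@ord_pred_inj n) r_le (ordS i0)).
by rewrite ordSK ltnn.
Qed.

(** * Realising words by rankings *)

Definition walk (q : 'I_n) (k : nat) : 'I_n := iter k (@ordS n) q.

Definition dist (q i : 'I_n) : nat := (i + (n - q)) %% n.

Lemma walk_val q k : val (walk q k) = (q + k) %% n.
Proof.
elim: k => [|k IH]; first by rewrite addn0 modn_small.
by rewrite /walk iterS /= -/(walk q k) IH -addn1 modnDml addn1 addnS.
Qed.

Lemma dist_lt q i : dist q i < n.
Proof. by rewrite ltn_pmod //; case: n q => [[]|]. Qed.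

Lemma walk_dist q i : walk q (dist q i) = i.
Proof.
apply: val_inj; rewrite walk_val /dist modnDmr.
have -> : q + (i + (n - q)) = i + n by have := ltn_ord q; lia.
by rewrite modnDr modn_small.
Qed.

Lemma dist_ordS q i : dist q (ordS i) = (dist q i).+1 %% n.
Proof. by rewrite /dist /= modnDml -[in RHS]addn1 modnDml addn1 addSn. Qed.

Lemma dist_eq0 q i : dist q i = 0 -> i = q.
Proof. by move=> d0; rewrite -(walk_dist q i) d0. Qed.

Lemma walk_neq i k : 0 < k < n -> walk i k != i.
Proof.
move=> /andP[k_gt0 k_lt]; apply/eqP => /(congr1 val); rewrite walk_val /=.
have i_lt := ltn_ord i.
case: (ltnP (i + k) n) => [lt_n|ge_n]; first by rewrite modn_small //; lia.
have -> : i + k = (i + k - n) + n by lia.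
by rewrite modnDr modn_small; lia.
Qed.

Lemma ordS_ind q (P : 'I_n -> bool) :
  P q -> (forall i, P i -> P (ordS i)) -> forall i, P i.
Proof.
move=> Pq PS i; rewrite -(walk_dist q i).
by elim: (dist q i) => [|k IH] //; rewrite /walk iterS; apply: PS.
Qed.

(* Ranks read off [w] while walking around the cycle from [q]: each [Lt] step
   climbs by [n] and each [Gt] step descends by one, so that after [n.-1] steps
   the rank exceeds the starting one as soon as [w] has a [Lt]; this makes the
   step closing the cycle a descent, as [w (ord_pred q) = Gt] requires. *)
Fixpoint height w (q : 'I_n) (k : nat) : nat :=
  if k is k'.+1 then
    let h := height w q k' in
    match w (walk q k') with Lt => h + n | Gt => h.-1 | Eq => h end
  else n.

Lemma height_lb w q k : n <= height w q k + k.
Proof. by elim: k => [|k IH] /=; [rewrite addn0 | case: (w _); lia]. Qed.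

Lemma height_lb_Lt w q k j :
  j < k -> w (walk q j) = Lt -> n + n <= height w q k + k.
Proof.
elim: k => [|k IH] //= j_lt w_j; move: j_lt; rewrite ltnS leq_eqVlt.
case/orP=> [/eqP <-|j_lt]; first by rewrite w_j; have := height_lb w q j; lia.
by have := IH j_lt w_j; case: (w _); lia.
Qed.

Lemma dist_last q i : (dist q i).+1 = n -> i = ord_pred q.
Proof.
move=> d_last; have -> : q = ordS i by apply/esym/dist_eq0; rewrite dist_ordS d_last modnn.
by rewrite ordSK.
Qed.

Lemma labels_height w q :
  w (ord_pred q) = Gt -> (exists j, w j = Lt) ->
  labels (fun i => height w q (dist q i)) = w.
Proof.
move=> w_pred [j w_j]; apply/ffunP => i; rewrite ffunE dist_ordS.
have [d_lt|d_last] : (dist q i).+1 < n \/ (dist q i).+1 = n by have := dist_lt q i; lia.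
  rewrite modn_small //= walk_dist; have := height_lb w q (dist q i).
  by case: (w i) => /= h_lb; apply/eqP; rewrite ?cmpn_Lt ?cmpn_Gt ?cmpn_Eq //; lia.
have dj_lt : dist q j < n.-1.
  have := dist_lt q j; rewrite leq_eqVlt => /orP[/eqP/dist_last j_pred|]; last by lia.
  by move: w_j; rewrite j_pred w_pred.
have := height_lb_Lt (w := w) (q := q) dj_lt; rewrite walk_dist => /(_ w_j) h_lb.
rewrite d_last modnn (_ : dist q i = n.-1) /=; last by lia.
by rewrite (dist_last d_last) w_pred; apply/eqP; rewrite cmpn_Gt; lia.
Qed.

(* Unless [w] is constant [Eq], it has a [Gt] and the letter before some [Gt] is
   an [Eq]; turning every such [Eq] into [Lt] gives a word with both [Lt] and
   [Gt] that [flatten_peaks] maps back to [w], and [height] realises it. *)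
Lemma admissible_realized w :
  w \in admissible -> exists r, flatten_peaks (labels r) = w.
Proof.
rewrite in_setD inE negb_or => /andP[/andP[not_flat not_allGt]].
rewrite inE => /forallP w_nopeak.
have [allEq|] := boolP [forall i, w i == Eq].
  by exists (fun=> 0); apply/ffunP => i; rewrite !ffunE /cmpn ltnn (eqP (forallP allEq i)).
rewrite negb_forall => someNeq; move: not_flat; rewrite someNeq andbT negb_forall.
case/existsP => p; rewrite negbK => /eqP w_p.
move: not_allGt; rewrite negb_forall => /existsP[j w_j].
have [t /andP[w_t w_St]] : exists t, (w t != Gt) && (w (ordS t) == Gt).
  apply/existsP; apply: contraT; rewrite negb_exists => /forallP no_rise.
  suff : w p != Gt by rewrite w_p.
  apply: (ordS_ind (P := fun i => w i != Gt) w_j) => i w_i.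
  by move: (no_rise i); rewrite w_i.
pose u := [ffun i => if (w i == Eq) && (w (ordS i) == Gt) then Lt else w i].
have u_Gt i : (u i == Gt) = (w i == Gt) by rewrite ffunE; case: ifP => // /andP[/eqP ->].
exists (fun i => height u (ordS p) (dist (ordS p) i)).
rewrite labels_height; first last.
- exists t; rewrite ffunE w_St andbT.
  by move: w_t (w_nopeak t); rewrite /nopeak w_St andbT; case: (w t).
- by rewrite ordSK; apply/eqP; rewrite u_Gt w_p.
apply/ffunP => i; rewrite ffunE u_Gt.
by move: (w_nopeak i); rewrite /nopeak ffunE; case: (w i); case: (w (ordS i)).
Qed.

Lemma admissible_solution w x : w \in admissible -> label_solution w x (ldyn w x).
Proof.
case/admissible_realized => r <-; have [y sol] := rank_solution_exists r x.
by apply: (ldyn_solution (y := y)); rewrite label_solution_flatten -rank_solutionE.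
Qed.

Lemma dyn_setE : 0 < n -> dyn_set n = ldyn @: admissible.
Proof.
move=> n_gt0; apply/setP => F; rewrite inE; apply/asboolP/imsetP.
  case=> D [[_ count1] ->]; exists (flatten_peaks (labels (rank D))).
    by rewrite in_setD (labels_nondegenerate _ (Ordinal n_gt0)) flatten_peaks_peakless.
  exact: dynamics_labels.
case=> w /admissible_realized [r <-] ->.
by have [D sched dynD] := schedule_of_ranks r; exists D.
Qed.

(** * Separating dynamics *)

Definition probe (p : 'I_n) : config n := [ffun j => j != p].

Lemma probeE p j : probe p j = (j != p).
Proof. by rewrite ffunE. Qed.

Lemma probe_solution_at w p y : label_solution w (probe p) y -> y p = false.
Proof.
by move=> sol; apply: negbTE; apply/negP => /(label_solution_le sol); rewrite probeE eqxx.
Qed.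

Lemma probe_pred_solution w y i :
  2 < n -> label_solution w (probe (ord_pred i)) y -> y i = (w i != Gt).
Proof.
set b := ord_pred i => n_gt2 sol; have /label_solutionP y_eq := sol.
have b_neq k : 0 < k < 3 -> walk b k != b by move=> k_lt; apply: walk_neq; lia.
have b1 : i != b by have := b_neq 1; rewrite /walk /= ord_predK; apply.
have b2 : ordS i != b by have := b_neq 2; rewrite /walk /= ord_predK; apply.
case w_i: (w i == Gt).
  by rewrite y_eq w_i /r8 -!andbA (label_solution_Gt sol (eqP w_i)) !andbF.
rewrite y_eq w_i /r8 !probeE b1 b2 !andbT.
case: ifP => _; last by rewrite eqxx.
by rewrite (probe_solution_at sol).
Qed.

Lemma probe_pred2_solution w y i :
  4 < n -> label_solution w (probe (ord_pred (ord_pred i))) y -> w (ordS i) != Gt ->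
  y (ordS i) = (w i == Lt).
Proof.
set b := ord_pred (ord_pred i) => n_gt4 sol w_Si; have /label_solutionP y_eq := sol.
have walkE k : walk b k.+2 = iter k (@ordS n) i by rewrite /walk !iterSr /b !ord_predK.
have b_neq k : 0 < k < 5 -> walk b k != b by move=> k_lt; apply: walk_neq; lia.
have b1 : ord_pred i != b by have := b_neq 1; rewrite /walk /= ord_predK; apply.
have b2 : i != b by have := b_neq 2; rewrite walkE; apply.
have b3 : ordS i != b by have := b_neq 3; rewrite walkE; apply.
have b4 : ordS (ordS i) != b by have := b_neq 4; rewrite walkE; apply.
rewrite y_eq ordSK (negbTE w_Si) /r8 !probeE b3 b4 !andbT.
case w_i: (w i == Lt); last by rewrite b2.
rewrite y_eq /r8 !probeE b2 (_ : (w i == Gt) = false) ?b3 ?andbT; last by rewrite (eqP w_i).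
case: ifP => w_pi; last by rewrite b1.
rewrite y_eq /r8 ord_predK !probeE b1 (_ : (w (ord_pred i) == Gt) = false) ?b2 ?andbT;
  last by rewrite (eqP w_pi).
case: ifP => _; last by rewrite eqxx.
by rewrite (probe_solution_at sol).
Qed.

Lemma ldyn_inj : 4 < n -> {in admissible &, injective ldyn}.
Proof.
move=> n_gt4 w w' adm_w adm_w' same_dyn.
have sol x : label_solution w x (ldyn w x) /\ label_solution w' x (ldyn w x).
  by split; [|rewrite same_dyn]; apply: admissible_solution.
have sameGt i : (w i == Gt) = (w' i == Gt).
  have [sol_w sol_w'] := sol (probe (ord_pred i)).
  apply: negb_inj.
  by rewrite -(probe_pred_solution _ sol_w) -?(probe_pred_solution _ sol_w') //; lia.
have sameLt i : w (ordS i) != Gt -> (w i == Lt) = (w' i == Lt).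
  move=> w_Si; have [sol_w sol_w'] := sol (probe (ord_pred (ord_pred i))).
  rewrite -(probe_pred2_solution _ sol_w) // (probe_pred2_solution _ sol_w') -?sameGt //.
apply/ffunP => i; apply: comparison_eq (sameGt i).
move: adm_w adm_w'; rewrite !in_setD !inE.
move=> /andP[_ /forallP nopeak_w] /andP[_ /forallP nopeak_w'].
case: (w (ordS i) =P Gt) => [w_Si | /eqP/sameLt //].
move: (nopeak_w i) (nopeak_w' i); rewrite /nopeak -sameGt w_Si !andbT.
by move=> /negbTE -> /negbTE ->.
Qed.

Lemma card_dyn_set : 4 < n -> #|dyn_set n| = #|admissible|.
Proof. by move=> n_gt4; rewrite dyn_setE ?card_in_imset //; [apply: ldyn_inj | lia]. Qed.

End Dynamics.

(** * Counting peakless words *)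

Fixpoint words (k : nat) : seq (seq comparison) :=
  if k is k'.+1 then
    [seq Lt :: s | s <- words k'] ++ [seq Eq :: s | s <- words k'] ++
    [seq Gt :: s | s <- words k']
  else [:: [::]].

Lemma mem_cons_map (a b : comparison) s (ss : seq (seq comparison)) :
  (a :: s \in [seq b :: t | t <- ss]) = (a == b) && (s \in ss).
Proof. by apply/mapP/andP => [[t t_in [-> ->]] | [/eqP -> s_in]]; last exists s. Qed.

Lemma mem_words k s : (s \in words k) = (size s == k).
Proof.
elim: k s => [|k IH] [|a s] //=; first by rewrite !mem_cat; apply/negP => /or3P[] /mapP[].
by rewrite !mem_cat !mem_cons_map IH eqSS; case: a; rewrite ?orbF.
Qed.

Lemma words_uniq k : uniq (words k).
Proof.
have cons_inj (a : comparison) : injective (cons a) by move=> s t [].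
elim: k => [|k IH] //=.
rewrite !cat_uniq !map_inj_uniq // IH !has_cat !negb_or /=.
rewrite andbT -andbA; apply/and3P; split;
  by rewrite has_map; apply/hasPn => s _ /=; rewrite mem_cons_map.
Qed.

Lemma card_ffun_words n (P : pred (seq comparison)) :
  #|[set w : cword n | P (codom w)]| = count P (words n).
Proof.
rewrite cardsE cardE size_filter -enumT.
transitivity (count P [seq codom w | w : cword n <- enum {: cword n}]).
  by rewrite count_map; apply: eq_count.
apply/permP; apply: uniq_perm.
- rewrite map_inj_uniq ?enum_uniq // => w w' same_codom.
  by apply: (can_inj fgraphK); apply: val_inj; rewrite /= -!codom_ffun.
- exact: words_uniq.
move=> s; rewrite mem_words; apply/mapP/eqP => [[w _ ->]|size_s].
  by rewrite size_codom card_ord.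
have size_s' : size s == #|'I_n| by rewrite card_ord size_s.
by exists (Finfun (Tuple size_s')); rewrite ?mem_enum // codom_ffun FinfunK.
Qed.

Lemma next_enum_ord n (i : 'I_n) : next (enum 'I_n) i = ordS i.
Proof.
rewrite next_nth mem_enum index_enum_ord.
case def_e: (enum 'I_n) => [|i0 e]; first by move: (mem_enum 'I_n i); rewrite def_e.
rewrite -[e]/(behead (i0 :: e)) -def_e nth_behead; apply: val_inj => /=.
have [lt_n|eq_n] : i.+1 < n \/ i.+1 = n by have := ltn_ord i; lia.
  by rewrite nth_enum_ord // modn_small.
rewrite nth_default ?size_enum_ord ?eq_n // modnn.
by have := nth_enum_ord i0 (_ : 0 < n); rewrite def_e => ->; lia.
Qed.

Lemma cycle_enum_ord n (e : rel 'I_n) : cycle e (enum 'I_n) = [forall i, e i (ordS i)].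
Proof.
apply/idP/forallP => [e_cycle i|e_next].
  by rewrite -next_enum_ord; apply: next_cycle e_cycle _; rewrite mem_enum.
by apply: cycle_from_next (enum_uniq _) _ => i _; rewrite next_enum_ord.
Qed.

Definition closed_walks (k : nat) : nat := count (cycle nopeak) (words k).

Lemma card_peakless n : #|peakless n| = closed_walks n.
Proof.
rewrite /closed_walks -card_ffun_words; apply: eq_card => w.
by rewrite !inE codomE cycle_map cycle_enum_ord.
Qed.

Definition walks (k : nat) (a b : comparison) : nat :=
  count (fun s => path nopeak a (rcons s b)) (words k).

Lemma count_andl (T : Type) (c : bool) (P : pred T) s :
  count (fun x => c && P x) s = c * count P s.
Proof. by case: c; rewrite ?mul1n ?mul0n ?count_pred0. Qed.

Lemma closed_walksS k : closed_walks k.+1 = walks k Lt Lt + walks k Eq Eq + walks k Gt Gt.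
Proof. by rewrite /closed_walks /= !count_cat !count_map addnA. Qed.

Lemma walksS k a b :
  walks k.+1 a b =
  nopeak a Lt * walks k Lt b + nopeak a Eq * walks k Eq b + nopeak a Gt * walks k Gt b.
Proof. by rewrite /walks /= !count_cat !count_map addnA /preim /= !count_andl. Qed.

(* A first letter other than [Lt] imposes no constraint on its successor. *)
Lemma walks_Gt k b : walks k Gt b = walks k Eq b.
Proof. by apply: eq_count => -[|[] s]. Qed.

(* The transfer matrix of [nopeak] has characteristic polynomial t^3 - 3t^2 + t. *)
Lemma walks_rec k a b : walks k.+2 a b + walks k a b = 3 * walks k.+1 a b.
Proof. by case: a; rewrite !(walksS k.+1) !(walksS k) !walks_Gt /=; lia. Qed.

Lemma closed_walks_rec k : closed_walks k.+3 + closed_walks k.+1 = 3 * closed_walks k.+2.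
Proof.
rewrite !closed_walksS.
by have := walks_rec k Lt Lt; have := walks_rec k Eq Eq; have := walks_rec k Gt Gt; lia.
Qed.

Lemma card_noGt n : #|[set w : cword n | [forall i, w i != Gt]]| = 2 ^ n.
Proof.
pose embed (b : {ffun 'I_n -> bool}) := [ffun i => if b i then Lt else Eq].
have embed_inj : injective embed.
  move=> b b' /ffunP same; apply/ffunP => i.
  by move: (same i); rewrite !ffunE; do 2!case: (_ i).
have -> : [set w : cword n | [forall i, w i != Gt]] = embed @: setT.
  apply/setP => w; rewrite inE; apply/forallP/imsetP => [noGt|[b _ ->] i]; last first.
    by rewrite ffunE; case: (b i).
  exists [ffun i => w i == Lt]; rewrite ?inE //; apply/ffunP => i; rewrite !ffunE.
  by move: (noGt i); case: (w i).
by rewrite card_imset // cardsT card_ffun card_bool card_ord.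
Qed.

Lemma forall_eq_const (T : finType) (U : eqType) (f : {ffun T -> U}) c :
  [forall i, f i == c] = (f == [ffun=> c]).
Proof.
apply/forallP/eqP => [f_c|-> i]; last by rewrite ffunE.
by apply/ffunP => i; rewrite ffunE; apply/eqP.
Qed.

Lemma degenerateE n :
  degenerate n = [set w : cword n | [forall i, w i != Gt]]
                   :\ [ffun=> Eq] :|: [set [ffun=> Gt]].
Proof.
by apply/setP => w; rewrite !inE [in RHS]andbC -negb_forall !forall_eq_const.
Qed.

Lemma card_admissible n : 0 < n -> #|admissible n| + 2 ^ n = #|peakless n|.
Proof.
move=> n_gt0.
have degenerate_peakless : degenerate n \subset peakless n.
  apply/subsetP => w; rewrite !inE => /orP[/andP[/forallP noGt _]|/forallP allGt];
    apply/forallP => i; rewrite /nopeak.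
    by rewrite (negbTE (noGt (ordS i))) andbF.
  by rewrite (eqP (allGt i)).
suff <- : #|degenerate n| = 2 ^ n.
  by rewrite /admissible cardsD (setIidPr degenerate_peakless) subnK ?subset_leq_card.
have Eq_noGt : [ffun=> Eq] \in [set w : cword n | [forall i, w i != Gt]].
  by rewrite inE; apply/forallP => i; rewrite ffunE.
have Gt_Gt : [forall i : 'I_n, [ffun=> Gt] i != Gt] = false.
  by apply: negbTE; apply/forallPn; exists (Ordinal n_gt0); rewrite ffunE negbK.
rewrite degenerateE setUC cardsU1 !inE Gt_Gt andbF -card_noGt.
by rewrite [in RHS](cardsD1 [ffun=> Eq]) Eq_noGt.
Qed.

Local Open Scope ring_scope.

(** * The golden ratio *)

Lemma power_sum_rec (R : comPzRingType) (a b : R) (u : nat -> R) :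
  u 0%N = a + b -> u 1%N = a ^+ 2 + b ^+ 2 ->
  (forall k, u k.+2 = (a + b) * u k.+1 - a * b * u k) ->
  forall k, u k = a ^+ k.+1 + b ^+ k.+1.
Proof.
move=> u0 u1 u_rec.
suff u_pair k : u k = a ^+ k.+1 + b ^+ k.+1 /\ u k.+1 = a ^+ k.+2 + b ^+ k.+2.
  by move=> k; case: (u_pair k).
elim: k => [|k [uk uk1]] //; split=> //.
by rewrite u_rec uk uk1 !exprS; ring.
Qed.

Section Golden.
Variable R : realType.
Local Notation phi := (golden R).

Lemma golden_sqr : phi ^+ 2 = phi + 1.
Proof.
rewrite /golden; set s := Num.sqrt _.
have s2 : s ^+ 2 = 5%:R by rewrite sqr_sqrtr // ler0n.
apply/eqP; rewrite -subr_eq0.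
have -> : ((1 + s) / 2%:R) ^+ 2 - ((1 + s) / 2%:R + 1) = (s ^+ 2 - 5%:R) / 4%:R by field.
by rewrite s2 subrr mul0r.
Qed.

Lemma golden_neq0 : phi != 0.
Proof. by apply: contra_eq_neq golden_sqr => ->; rewrite expr0n add0r eq_sym oner_eq0. Qed.

Lemma golden_inv : phi^-1 = phi - 1.
Proof.
apply: (mulfI golden_neq0); rewrite mulfV ?golden_neq0 // mulrBr mulr1 -expr2 golden_sqr.
by ring.
Qed.

Lemma golden_sqr_add_inv : phi ^+ 2 + (phi ^+ 2)^-1 = 3%:R.
Proof.
rewrite -exprVn golden_inv.
have -> : phi ^+ 2 + (phi - 1) ^+ 2 = 2%:R * phi ^+ 2 - 2%:R * phi + 1 by ring.
by rewrite golden_sqr; ring.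
Qed.

Lemma closed_walks_golden k :
  (closed_walks k.+1)%:R = (phi ^+ 2) ^+ k.+1 + (phi ^+ 2)^-1 ^+ k.+1 :> R.
Proof.
have sum3 := golden_sqr_add_inv.
have prod1 : phi ^+ 2 * (phi ^+ 2)^-1 = 1 by rewrite mulfV // expf_neq0 // golden_neq0.
apply: (power_sum_rec (u := fun k => (closed_walks k.+1)%:R)) => [||{}k].
- by rewrite sum3.
- have -> : (phi ^+ 2) ^+ 2 + (phi ^+ 2)^-1 ^+ 2 =
            (phi ^+ 2 + (phi ^+ 2)^-1) ^+ 2 - 2%:R * (phi ^+ 2 * (phi ^+ 2)^-1) by ring.
  by rewrite sum3 prod1 (_ : closed_walks 2 = 7%N) //; ring.
have := congr1 (fun m => m%:R : R) (closed_walks_rec k); rewrite /= natrD natrM.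
by rewrite sum3 prod1 mul1r => /(canRL (addrK _)).
Qed.

End Golden.

Theorem mainTheorem6 (R : realType) (n : nat) (hn : (5 <= n)%N) :
  mu8 R n =
  ((golden R) ^+ (2 * n) + (golden R) ^- (2 * n) - 2%:R ^+ n)
    / (3%:R ^+ n - 2%:R ^+ n.+1 + 2%:R).
Proof.
have n_gt0 : (0 < n)%N by lia.
rewrite /mu8 card_dyn_set; last by lia.
have := congr1 (fun m => m%:R : R) (card_admissible n_gt0).
rewrite /= natrD card_peakless -(prednK n_gt0) closed_walks_golden => /(canRL (addrK _)) ->.
by rewrite natrX !exprVn -!exprM.
Qed.
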